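(* Let $q\ge2$ and $\mu,R>0$. There is no sequence of ID codes for $\Pi^q_{n_i}$, $i=1,2,\dots$, with $n_i\to\infty$, with $M_i\ge 2^{Rn_i^{q-1}}$ messages, and with type-I and type-II error probabilities satisfying $\lambda_{1,i}<n_i^{-\mu}$ and $\lambda_{2,i}<n_i^{-\mu}$ for all $i$.
   Context: Fix an integer $q\ge 2$ and let $\mathcal A_q=\{1,\dots,q\}$. For $n\ge 1$, $S_n$ is the symmetric group on $\{1,\dots,n\}$, and for $\mathbf x\in\mathcal A_q^n$, $\sigma\in S_n$, we write $\sigma\mathbf x=(x_{\sigma^{-1}(1)},\dots,x_{\sigma^{-1}(n)})$. The $n$-block $q$-ary uniform permutation channel $\Pi^q_n$ has input and output alphabet $\mathcal A_q^n$ and transition probabilities $\Pi^q_n(\mathbf y\mid\mathbf x)=\frac{1}{n!}\sum_{\sigma\in S_n}\mathbf 1\{\mathbf y=\sigma\mathbf x\}$; $\Pi^q$ denotes the family $(\Pi^q_n)_{n\ge1}$. An ID code (with deterministic decoders) with $M$ messages for $\Pi^q_n$ (an ''$(n,M,\lambda_1,\lambda_2)$ ID code'') is a family $\{(Q_i,\mathcal D_i)\}_{i=1}^M$ where each $Q_i$ is a probability distribution on $\mathcal A_q^n$ (the stochastic encoder of message $i$) and $\mathcal D_i\subseteq\mathcal A_q^n$ (the acceptance region of message $i$). Its error probabilities are $\lambda_{i\to j}=\sum_{\mathbf x}Q_i(\mathbf x)\sum_{\mathbf y\in\mathcal D_j}\Pi^q_n(\mathbf y\mid\mathbf x)$ for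 $i\ne j$ and $\lambda_{i\not\to i}=\sum_{\mathbf x}Q_i(\mathbf x)\sum_{\mathbf y\notin\mathcal D_i}\Pi^q_n(\mathbf y\mid\mathbf x)$; the type-I error probability is $\lambda_1=\max_i\lambda_{i\not\to i}$ and the type-II error probability is $\lambda_2=\max_{i\ne j}\lambda_{i\to j}$. *)

From HB Require Import structures.
From mathcomp Require Import all_boot all_order all_algebra all_fingroup.
From mathcomp Require Import all_classical all_reals all_analysis.
Set Implicit Arguments. Unset Strict Implicit. Unset Printing Implicit Defensive.
Import Order.TTheory GRing.Theory Num.Theory.
Local Open Scope ring_scope.

(* Alphabet A_q = {1,...,q} is represented by 'I_q = {0,...,q-1};
   words of length n are finite functions 'I_n -> 'I_q. *)
Definition word (q n : nat) := {ffun 'I_n -> 'I_q}.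

Definition permw (q n : nat) (s : 'S_n) (x : word q n) : word q n :=
  [ffun i => x ((s^-1)%g i)].

Definition perm_channel (R : realType) (q n : nat) (y x : word q n) : R :=
  (n`!%:R)^-1 * \sum_(s : 'S_n) (y == permw s x)%:R.

(* An ID code with deterministic decoders for Pi^q_n:
   M messages, stochastic encoders Q i (probability distributions on A_q^n),
   acceptance regions D i. *)
Record IDcode (R : realType) (q n : nat) := {
  idM : nat;
  idQ : 'I_idM -> {ffun word q n -> R};
  idD : 'I_idM -> {set word q n};
  idQ_ge0 : forall i x, 0 <= idQ i x;
  idQ_sum1 : forall i, \sum_x idQ i x = 1
}.

Section Errors.
Variables (R : realType) (q n : nat) (C : IDcode R q n).

Definition lam_to (i j : 'I_(idM C)) : R :=
  \sum_x @idQ _ _ _ C i x * \sum_(y in @idD _ _ _ C j) perm_channel R y x.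

Definition lam_not (i : 'I_(idM C)) : R :=
  \sum_x @idQ _ _ _ C i x * \sum_(y in ~: @idD _ _ _ C i) perm_channel R y x.

(* type-I and type-II error probabilities (max of nonnegative quantities;
   empty maxima are 0) *)
Definition lambda1 : R := \big[Num.max/0]_(i < idM C) lam_not i.
Definition lambda2 : R :=
  \big[Num.max/0]_(i < idM C) \big[Num.max/0]_(j < idM C | j != i) lam_to i j.
End Errors.

From HB Require Import structures.
From mathcomp Require Import all_boot all_order all_algebra all_fingroup.
From mathcomp Require Import all_classical all_reals all_analysis.
From mathcomp Require Import ring lra zify.
Set Implicit Arguments. Unset Strict Implicit. Unset Printing Implicit Defensive.
Import Order.TTheory GRing.Theory Num.Theory.
Local Open Scope ring_scope.

(* Let B_j be the set of inputs accepted by D_j with probability at least 1/2.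
   By Markov's inequality Q_i gives mass at least 1 - d to B_i and at most d to
   B_j for j <> i, where d bounds twice the error probabilities.  Draw s
   independent inputs from Q_i: if (M - 1) d^s < (1 - d)^s then, with positive
   probability, all of them lie in B_i while each B_j misses one of them.  The
   acceptance probabilities of the permutation channel only depend on the type
   of the input, so the set of types of these s inputs determines i.  Hence M is
   at most the number of sets of at most s types, which is below
   ((1 - d) / d)^s / 2 for s about e d (n + 1)^(q - 1).  With d = 2 n^-mu this
   gives log M = O(n^(q - 1 - mu) log n), which is o(n^(q - 1)). *)

Section PermChannel.
Variables (R : realType) (q n : nat).
Implicit Types (x y : word q n) (D : {set word q n}).

Lemma perm_channel_ge0 y x : 0 <= perm_channel R y x.
Proof. by rewrite mulr_ge0 ?invr_ge0 ?ler0n ?sumr_ge0. Qed.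

Lemma sum_perm_channel x : \sum_y perm_channel R y x = 1.
Proof.
rewrite -mulr_sumr exchange_big /= (eq_bigr (fun _ => 1)) => [|s _]; last first.
  by rewrite (bigD1 (permw s x)) //= eqxx big1 ?addr0 // => y /negbTE ->.
by rewrite sumr_const card_Sn mulVf // pnatr_eq0 -lt0n fact_gt0.
Qed.

Definition accept D x : R := \sum_(y in D) perm_channel R y x.

Lemma accept_ge0 D x : 0 <= accept D x.
Proof. exact/sumr_ge0/(fun y _ => perm_channel_ge0 y x). Qed.

Lemma accept_setC D x : accept (~: D) x = 1 - accept D x.
Proof.
rewrite /accept -(sum_perm_channel x) [\sum_y _](bigID (mem D)) /= addrAC subrr add0r.
by apply: eq_bigl => y; rewrite inE.
Qed.

Lemma permwM (s t : 'S_n) x : permw s (permw t x) = permw (t * s)%g x.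
Proof. by apply/ffunP => i; rewrite !ffunE invMg permM. Qed.

Lemma perm_channel_permw (t : 'S_n) y x :
  perm_channel R y (permw t x) = perm_channel R y x.
Proof.
congr (_ * _); rewrite (reindex_inj (mulgI t^-1)%g) /=.
by apply: eq_bigr => s _; rewrite permwM mulgA mulgV mul1g.
Qed.

Lemma accept_permw (t : 'S_n) D x : accept D (permw t x) = accept D x.
Proof. by apply: eq_bigr => y _; rewrite perm_channel_permw. Qed.

End PermChannel.

Lemma perm_eq_count_but (T : eqType) (c0 : T) (s t : seq T) :
  size s = size t -> (forall c, c != c0 -> count_mem c s = count_mem c t) ->
  perm_eq s t.
Proof.
move=> Est Ec; apply/allP => c _; apply/eqP.
have [->|/Ec //] := eqVneq c c0.
have Ef : perm_eq [seq c <- s | c != c0] [seq c <- t | c != c0].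
  apply/allP => b _; apply/eqP; rewrite !count_filter.
  have [->|nc0] := eqVneq b c0.
    by rewrite !(@eq_count _ _ pred0) ?count_pred0 // => c' /=; case: eqP => // ->; rewrite eqxx.
  by rewrite !(@eq_count _ _ (pred1 b)) ?Ec // => c' /=; case: eqP => // ->; rewrite nc0.
have Es : count (predC (pred1 c0)) s = count (predC (pred1 c0)) t.
  by rewrite -!size_filter; exact: perm_size Ef.
have := count_predC (pred1 c0) s; have := count_predC (pred1 c0) t.
by rewrite Es Est; lia.
Qed.

Section WordTypes.
Variables (q n : nat).

Definition letters (x : word q.+1 n) : n.-tuple 'I_q.+1 := [tuple x i | i < n].

(* The count of the last letter is determined by the others, so there are
   only (n + 1)^q types. *)
Definition wtype (x : word q.+1 n) : {ffun 'I_q -> 'I_n.+1} :=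
  [ffun k => inord (count_mem (widen_ord (leqnSn q) k) (letters x))].

Lemma count_letters_lt x c : (count_mem c (letters x) < n.+1)%N.
Proof. by rewrite ltnS -[n in (_ <= n)%N](size_tuple (letters x)) count_size. Qed.

Lemma wtype_inj_perm x y : wtype x = wtype y -> exists t : 'S_n, y = permw t x.
Proof.
move=> Exy.
have /tuple_permP[p Ep] : perm_eq (letters y) (letters x).
  apply: (@perm_eq_count_but _ ord_max); first by rewrite !size_tuple.
  move=> c; case: (unliftP ord_max c) => [k -> _|-> /eqP //].
  have -> : lift ord_max k = widen_ord (leqnSn q) k by apply: val_inj; exact: lift_max.
  by move/ffunP/(_ k)/(congr1 val): Exy; rewrite !ffunE /= !inordK ?count_letters_lt.
exists p^-1%g; apply/ffunP => i; rewrite ffunE invgK.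
by have := congr1 (fun t : n.-tuple _ => tnth t i) (val_inj Ep); rewrite /= !tnth_mktuple.
Qed.

End WordTypes.

Section TupleSampling.
Variables (R : realDomainType) (X J : finType) (Q : X -> R).
Hypothesis Q_ge0 : forall x, 0 <= Q x.

Lemma expr_sum_in (A : {set X}) (s : nat) :
  (\sum_(x in A) Q x) ^+ s =
  \sum_(f : {ffun 'I_s -> X}) \prod_(k < s) (Q (f k) * (f k \in A)%:R).
Proof.
rewrite big_mkcond -[in LHS](card_ord s) -prodr_const /=.
rewrite -(bigA_distr_bigA (fun (k : 'I_s) x => Q x * (x \in A)%:R)).
by apply: eq_bigr => k _; apply: eq_bigr => x _; case: (x \in A); rewrite ?mulr1 ?mulr0.
Qed.

(* The probabilistic method for s independent draws from the weight Q: the left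
   side bounds the probability that all draws fall in one of the B j. *)
Lemma exists_tuple_in_not_within (A : {set X}) (P : pred J) (B : J -> {set X}) s :
  \sum_(j | P j) (\sum_(x in B j) Q x) ^+ s < (\sum_(x in A) Q x) ^+ s ->
  exists f : {ffun 'I_s -> X},
    (forall k, f k \in A) /\ (forall j, P j -> exists k, f k \notin B j).
Proof.
have [f /andP[/forallP fA /forallP fB] _ | none] := pickP (fun f : {ffun 'I_s -> X} =>
  [forall k, f k \in A] && [forall j, P j ==> [exists k, f k \notin B j]]).
  by exists f; split => // j Pj; apply/existsP/(implyP (fB j)).
rewrite ltNge => /negP[]; rewrite expr_sum_in.
under [X in _ <= X]eq_bigr do rewrite expr_sum_in.
have term_ge0 C (g : {ffun 'I_s -> X}) : 0 <= \prod_(k < s) (Q (g k) * (g k \in C)%:R).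
  by apply: prodr_ge0 => k _; rewrite mulr_ge0.
rewrite exchange_big /=; apply: ler_sum => f _.
have [fA|] := boolP [forall k, f k \in A]; last first.
  rewrite negb_forall => /existsP[k /negbTE fk].
  by rewrite (bigD1 k) //= fk mulr0 mul0r sumr_ge0.
move: (none f); rewrite fA /= => /negbT; rewrite negb_forall => /existsP[j].
rewrite negb_imply negb_exists => /andP[Pj /forallP fBj].
rewrite (bigD1 j) //= -[X in X <= _]addr0 lerD ?sumr_ge0 //.
rewrite [X in X <= _](eq_bigr (fun k => Q (f k) * (f k \in B j)%:R)) // => k _.
by rewrite (forallP fA k) -[f k \in B j]negbK fBj.
Qed.

End TupleSampling.

Section SmallSubsets.
Variables (R : realFieldType) (X : finType).

Lemma sum_expr_card (x : R) : \sum_(S : {set X}) x ^+ #|S| = (x + 1) ^+ #|X|.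
Proof.
rewrite exprD1n (partition_big (fun S : {set X} => inord #|S| : 'I_#|X|.+1) predT) //=.
apply: eq_bigr => k _.
have cardS (S : {set X}) : (#|S| < #|X|.+1)%N by rewrite ltnS max_card.
rewrite (eq_bigr (fun _ => x ^+ k)) => [|S /eqP <-]; last by rewrite inordK.
rewrite sumr_const -card_draws; congr (_ *+ _); apply: eq_card => S.
by rewrite unfold_in /= inordK // inE.
Qed.

Lemma card_small_subsets_le (s : nat) (x : R) : 0 < x -> x <= 1 ->
  #|[set S : {set X} | (#|S| <= s)%N]|%:R <= (x + 1) ^+ #|X| / x ^+ s.
Proof.
move=> x_gt0 x_le1.
rewrite -sum_expr_card mulr_suml -sum1_card natr_sum big_mkcond /=.
apply: ler_sum => S _; rewrite inE; case: ifP => [Ss|_]; last first.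
  by rewrite divr_ge0 // exprn_ge0 // ltW.
rewrite ler_pdivlMr ?exprn_gt0 // mul1r -(subnK Ss) exprD.
by rewrite ler_piMl ?exprn_ge0 ?exprn_ile1 // ltW.
Qed.

End SmallSubsets.

Section Decoding.
Variables (R : realType) (q n : nat) (C : IDcode R q n).
Local Notation Q := (@idQ _ _ _ C).
Local Notation D := (@idD _ _ _ C).
Implicit Types i j : 'I_(idM C).

Definition accepting_inputs j : {set word q n} :=
  [set x | 1/2 <= accept R (D j) x].

Lemma lam_not_le_lambda1 i : lam_not i <= lambda1 C.
Proof. exact: le_bigmax. Qed.

Lemma lam_to_le_lambda2 i j : j != i -> lam_to i j <= lambda2 C.
Proof.
move=> ji; apply: le_trans (le_bigmax _ _ i).
exact: (@le_bigmax_cond _ _ _ _ _ (fun j => j != i)).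
Qed.

(* Markov's inequality for the acceptance probability under Q i. *)
Lemma mass_accepting_inputs_le i j :
  \sum_(x in accepting_inputs j) Q i x <= 2 * lam_to i j.
Proof.
rewrite mulr_sumr big_mkcond /=; apply: ler_sum => x _.
rewrite inE; case: ifP => [acc_x|_]; last by rewrite !mulr_ge0 ?idQ_ge0 ?accept_ge0.
by rewrite mulrCA ler_peMr ?idQ_ge0 // -ler_pdivrMl // mulr1 -div1r.
Qed.

Lemma mass_accepting_inputs_ge i :
  1 - 2 * lam_not i <= \sum_(x in accepting_inputs i) Q i x.
Proof.
rewrite lerBlDr -lerBlDl -[X in X - _](idQ_sum1 i) (bigID (mem (accepting_inputs i))) /=.
rewrite addrAC subrr add0r mulr_sumr big_mkcond /=; apply: ler_sum => x _.
case: ifP => [acc_x|_]; last by rewrite !mulr_ge0 ?idQ_ge0 ?accept_ge0.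
rewrite mulrCA ler_peMr ?idQ_ge0 //.
change (1 <= 2 * accept R (~: D i) x); rewrite accept_setC.
by move: acc_x; rewrite inE -ltNge; lra.
Qed.

End Decoding.

Section MessageCount.
Variables (R : realType) (q n : nat) (C : IDcode R q.+1 n).
Local Notation Q := (@idQ _ _ _ C).

Definition type_sets (s : nat) :=
  [set S : {set {ffun 'I_q -> 'I_n.+1}} | (#|S| <= s)%N].

Lemma accept_wtype (D : {set word q.+1 n}) x y :
  wtype x = wtype y -> accept R D x = accept R D y.
Proof. by case/wtype_inj_perm => t ->; rewrite accept_permw. Qed.

Lemma card_le_type_sets (d : R) (s m : nat) :
  (m <= idM C)%N -> lambda1 C <= d / 2 -> lambda2 C <= d / 2 -> 0 <= d <= 1 ->
  m.-1%:R * d ^+ s < (1 - d) ^+ s -> (m <= #|type_sets s|)%N.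
Proof.
move=> le_mM l1_le l2_le /andP[d_ge0 d_le1] Hs.
pose msg (i : 'I_m) : 'I_(idM C) := widen_ord le_mM i.
pose B i := accepting_inputs (msg i).
have mass_ge0 i j : 0 <= \sum_(x in B j) Q (msg i) x.
  by apply: sumr_ge0 => x _; apply: idQ_ge0.
have sample i : exists f : {ffun 'I_s -> word q.+1 n},
    (forall k, f k \in B i) /\ (forall j, j != i -> exists k, f k \notin B j).
  apply: (exists_tuple_in_not_within (idQ_ge0 (msg i))).
  apply: le_lt_trans (lt_le_trans Hs _); last first.
    rewrite lerXn2r ?nnegrE ?subr_ge0 //; apply: le_trans (mass_accepting_inputs_ge _).
    by rewrite lerD2l lerN2 -ler_pdivlMl // mulrC (le_trans (lam_not_le_lambda1 _)).
  have -> : m.-1%:R * d ^+ s = \sum_(j | j != i) d ^+ s.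
    by rewrite sumr_const cardC1 card_ord mulr_natl.
  apply: ler_sum => j ji.
  rewrite lerXn2r ?nnegrE //; apply: le_trans (mass_accepting_inputs_le _ _) _.
  by rewrite -ler_pdivlMl // mulrC (le_trans (lam_to_le_lambda2 _)).
have [F HF] := fin_all_exists sample.
pose G i := [set wtype (F i k) | k : 'I_s].
have G_inj : injective G.
  move=> i j Gij; apply/eqP; apply: contraT => ij.
  have [k Fik] : exists k, F i k \notin B j by apply: (HF i).2; rewrite eq_sym.
  have /imsetP[k' _ Ek] : wtype (F i k) \in G j by rewrite -Gij; apply/imsetP; exists k.
  by move: Fik ((HF j).1 k'); rewrite !inE (accept_wtype _ Ek) => /negP.
have -> : m = #|[set G i | i : 'I_m]| by rewrite card_imset // card_ord.
apply/subset_leq_card/fintype.subsetP => _ /imsetP[i _ ->].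
by rewrite inE (leq_trans (leq_imset_card _ _)) ?card_ord.
Qed.

End MessageCount.

Lemma expR1_le4 (R : realType) : expR (1 : R) <= 4.
Proof.
have half_le : expR (2^-1 : R) <= 2.
  have := expR_ge1Dx (- 2^-1 : R); rewrite expRN.
  have := expR_gt0 (2^-1 : R); set y := expR _ => y_gt0.
  by rewrite -[y^-1]mul1r ler_pdivlMr //; lra.
have -> : expR (1 : R) = expR 2^-1 * expR 2^-1 by rewrite -expRD; congr expR; lra.
have := expR_gt0 (2^-1 : R); nra.
Qed.

(* Take x = e r in [card_small_subsets_le] and bound (1 + x)^T by e^(xT). *)
Lemma card_small_subsets_le_expr (R : realType) (X : finType) (r : R) (s : nat) :
  0 < r -> expR 1 * r <= 1 -> expR 1 * r * #|X|%:R + 1 <= s%:R ->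
  #|[set S : {set X} | (#|S| <= s)%N]|%:R <= r^-1 ^+ s / 2.
Proof.
set x := expR 1 * r => r_gt0 x_le1 xs.
have x_gt0 : 0 < x by rewrite mulr_gt0 ?expR_gt0.
apply: le_trans (card_small_subsets_le X s x_gt0 x_le1) _.
have num : (x + 1) ^+ #|X| <= expR (s%:R - 1).
  apply: (@le_trans _ _ (expR x ^+ #|X|)).
    rewrite lerXn2r ?nnegrE ?expR_ge0 ?addr_ge0 ?(ltW x_gt0) //.
    by rewrite addrC expR_ge1Dx.
  by rewrite -expRM_natl ler_expR; lra.
have -> : x ^+ s = expR s%:R * r ^+ s by rewrite exprMn -expRM_natl mulr1.
rewrite ler_pdivrMr ?mulr_gt0 ?expR_gt0 ?exprn_gt0 //; apply: le_trans num _.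
have -> : r^-1 ^+ s / 2 * (expR s%:R * r ^+ s) = expR s%:R / 2.
  by rewrite exprVn; field; rewrite expf_neq0 // gt_eqF.
have -> : expR (s%:R : R) = expR (s%:R - 1) * expR 1 by rewrite -expRD subrK.
rewrite ler_pdivlMr // ler_pM2l ?expR_gt0 // (le_trans _ (expR_ge1Dx 1)) //; lra.
Qed.

Lemma idcode_card_lt (R : realType) (q n : nat) (C : IDcode R q.+1 n) (d : R) (s : nat) :
  0 < d -> d <= 1/5 -> lambda1 C <= d / 2 -> lambda2 C <= d / 2 ->
  expR 1 * (d / (1 - d)) * (n.+1 ^ q)%:R + 1 <= s%:R ->
  (idM C)%:R < ((1 - d) / d) ^+ s.
Proof.
set Y := ((1 - d) / d) ^+ s => d_gt0 d_le l1_le l2_le s_ge.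
have s_gt0 : (0 < s)%N.
  have : 0 <= expR 1 * (d / (1 - d)) * (n.+1 ^ q)%:R.
    by rewrite !mulr_ge0 ?expR_ge0 ?invr_ge0 ?ler0n //; lra.
  by rewrite -(ltr_nat R); lra.
have ratio_ge4 : 4 <= (1 - d) / d by rewrite ler_pdivlMr //; lra.
have Y_ge4 : 4 <= Y.
  rewrite /Y -(prednK s_gt0) exprS; apply: le_trans (ler_peMr _ _) => //; first lra.
  by rewrite exprn_ege1 //; lra.
rewrite ltNge; apply/negP => YM.
pose m := Num.truncn Y.
have /andP[mY Ym] : m%:R <= Y < m.+1%:R by apply: truncn_itv; lra.
have m_gt0 : (0 < m)%N by rewrite truncn_gt0; lra.
have m_le : (m <= #|type_sets q n s|)%N.
  apply: (card_le_type_sets (C := C) (d := d)) => //.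
  - by rewrite -(ler_nat R); apply: le_trans YM.
  - by apply/andP; split; lra.
  rewrite -ltr_pdivlMr ?exprn_gt0 // -expr_div_n -/Y (lt_le_trans _ mY) //.
  by rewrite ltr_nat prednK ?ltnSn.
have card_le : #|type_sets q n s|%:R <= Y / 2.
  have r_gt0 : 0 < d / (1 - d) by rewrite divr_gt0 //; lra.
  rewrite /type_sets /Y -[(1 - d) / d]invf_div.
  apply: card_small_subsets_le_expr => //; last by rewrite card_ffun !card_ord.
  rewrite -ler_pdivlMr // div1r invf_div ler_pdivlMr; last lra.
  by apply: (@le_trans _ _ (4 * d)); [rewrite ler_wpM2r ?expR1_le4 //; lra | lra].
have : m%:R <= Y / 2 by apply: le_trans card_le; rewrite ler_nat.
lra.
Qed.

Lemma two_div_sqr_bounds (R : realFieldType) (a : R) :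
  4 <= a -> 0 < 2 / (a * a) <= 1/8.
Proof.
move=> a_ge4; have aa_ge : 16 <= a * a by nra.
apply/andP; split; first by rewrite divr_gt0 //; lra.
by rewrite ler_pdivrMr; lra.
Qed.

(* With d = 2 / a^2 and a = n^(mu/2), the exponent s ln (1 / d) is at most
   2 a s <= (32 2^q + 4) N^q / a, hence the threshold on a. *)
Lemma ratio_expr_le_exp2 (R : realType) (N a d rate : R) (q s : nat) :
  (0 < q)%N -> 1 <= N -> 4 <= a -> a * a <= N -> 0 < rate ->
  (32 * 2 ^+ q + 4) / (rate * ln 2) <= a -> d = 2 / (a * a) ->
  s%:R <= expR 1 * (d / (1 - d)) * (N + 1) ^+ q + 2 ->
  ((1 - d) / d) ^+ s <= 2 `^ (rate * N ^+ q).
Proof.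
move=> q_gt0 N_ge1 a_ge4 aaN rate_gt0 a_large d_def s_le.
have a_gt0 : 0 < a by lra.
have daa : d * (a * a) = 2 by rewrite d_def divfK // mulf_neq0 // gt_eqF.
have /andP[d_gt0 d_le] : 0 < d <= 1/8 by rewrite d_def two_div_sqr_bounds.
have ratio_le : (1 - d) / d <= expR (2 * a).
  apply: (@le_trans _ _ (a * a)); first by rewrite ler_pdivrMr // mulrC daa; lra.
  rewrite -expr2 -[a in a ^+ 2]lnK ?posrE // -expRM_natl ler_expR.
  by rewrite ler_pM2l // ltW // ln_sublinear.
pose P := N ^+ q; pose c : R := 2 ^+ q.
have c_gt0 : 0 < c by rewrite exprn_gt0.
have P_ge_N : N <= P by rewrite /P -(prednK q_gt0) exprS ler_peMr ?exprn_ege1 //; lra.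
have s_le' : s%:R * (a * a) <= 16 * c * P + 2 * (a * a).
  have r_ge0 : 0 <= d / (1 - d) by rewrite divr_ge0 //; lra.
  have r_le : d / (1 - d) <= 2 * d by rewrite ler_pdivrMr; nra.
  have T_le : (N + 1) ^+ q <= c * P by rewrite -exprMn lerXn2r ?nnegrE; lra.
  have e_le : expR 1 * (d / (1 - d)) <= 4 * (2 * d).
    by rewrite ler_pM ?expR_ge0 ?expR1_le4 //; lra.
  have er_le : expR 1 * (d / (1 - d)) * (N + 1) ^+ q <= 8 * d * (c * P).
    rewrite (_ : 8 * d = 4 * (2 * d)); last by ring.
    apply: ler_pM => //; first exact: mulr_ge0 (expR_ge0 _) r_ge0.
    by apply: exprn_ge0; lra.
  apply: (@le_trans _ _ ((8 * d * (c * P) + 2) * (a * a))).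
    by rewrite ler_pM2r ?mulr_gt0 //; lra.
  have -> : (8 * d * (c * P) + 2) * (a * a) = 8 * (d * (a * a)) * c * P + 2 * (a * a).
    by ring.
  by rewrite daa; lra.
have key : s%:R * (2 * a) <= rate * P * ln 2.
  have ln2_gt0 : 0 < ln (2 : R) by rewrite ln_gt0 //; lra.
  have K_le : 32 * c + 4 <= a * (rate * ln 2) by rewrite -ler_pdivrMr ?mulr_gt0.
  rewrite -(ler_pM2r a_gt0).
  apply: (@le_trans _ _ ((32 * c + 4) * P)); last first.
    have -> : rate * P * ln 2 * a = a * (rate * ln 2) * P by ring.
    by rewrite ler_wpM2r //; lra.
  have -> : s%:R * (2 * a) * a = 2 * (s%:R * (a * a)) by ring.
  lra.
apply: (@le_trans _ _ (expR (2 * a) ^+ s)).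
  by rewrite lerXn2r ?nnegrE ?expR_ge0 ?divr_ge0 //; lra.
rewrite -expRM_natl /powR ifF ?pnatr_eq0 // ler_expR.
exact: key.
Qed.

Lemma idcode_card_lt_exp2 (R : realType) (q n : nat) (C : IDcode R q.+1 n) (mu rate : R) :
  (0 < q)%N -> (0 < n)%N -> 0 < mu <= 1 -> 0 < rate ->
  Num.max 4 ((32 * 2 ^+ q + 4) / (rate * ln 2)) <= n%:R `^ (mu / 2) ->
  lambda1 C <= n%:R `^ (- mu) -> lambda2 C <= n%:R `^ (- mu) ->
  (idM C)%:R < 2 `^ (rate * n%:R ^+ q).
Proof.
move=> q_gt0 n_gt0 /andP[mu_gt0 mu_le1] rate_gt0.
rewrite ge_max => /andP[a_ge4 a_large] l1_le l2_le.
set N : R := n%:R in l1_le l2_le a_ge4 a_large *; set a := N `^ (mu / 2) in a_ge4 a_large.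
have N_ge1 : 1 <= N by rewrite ler1n.
have aa : a * a = N `^ mu.
  rewrite -powRD -?splitr // gt_eqF ?implybT //; lra.
have aaN : a * a <= N by rewrite aa -[X in _ <= X](powRr1 (ler0n _ n)) ler_powR.
have a_gt0 : 0 < a by lra.
set d := 2 / (a * a).
have d_half : N `^ (- mu) = d / 2.
  by rewrite powRN -aa /d; field; rewrite gt_eqF.
have /andP[d_gt0 d_le8] : 0 < d <= 1/8 by rewrite two_div_sqr_bounds.
have d_le : d <= 1/5 by lra.
pose s := (Num.truncn (expR 1 * (d / (1 - d)) * (n.+1 ^ q)%:R)).+2.
have r_ge0 : 0 <= d / (1 - d) by rewrite divr_ge0; lra.
have T_ge0 := mulr_ge0 (mulr_ge0 (expR_ge0 1) r_ge0) (ler0n R (n.+1 ^ q)).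
have /andP[s_lo s_hi] := truncn_itv T_ge0.
apply: (lt_le_trans (idcode_card_lt (s := s) d_gt0 d_le _ _ _)); rewrite -?d_half //.
  by rewrite /s -addn2 natrD; lra.
apply: ratio_expr_le_exp2 a_ge4 aaN rate_gt0 a_large _ _ => //.
have -> : (N + 1) ^+ q = (n.+1 ^ q)%:R by rewrite natrX -natr1.
by rewrite /s -addn2 natrD; lra.
Qed.

Lemma le_powR_of_powRV_le (R : realType) (K N e : R) :
  0 < e -> 0 <= K -> 0 <= N -> K `^ e^-1 <= N -> K <= N `^ e.
Proof.
move=> e_gt0 K_ge0 N_ge0 KN.
rewrite -[K in K <= _](powRr1 K_ge0) -(mulVf (lt0r_neq0 e_gt0)) powRrM.
by apply: ge0_ler_powR; rewrite ?nnegrE ?powR_ge0 // ltW.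
Qed.

Theorem theorem1 (RT : realType) (q : nat) (mu R : RT) :
  (2 <= q)%N -> 0 < mu -> 0 < R ->
  ~ exists (n : nat -> nat) (C : forall i : nat, IDcode RT q (n i)),
      (forall i, (0 < n i)%N) /\
      (forall N : nat, exists i0 : nat, forall i, (i0 <= i)%N -> (N <= n i)%N) /\
      (forall i, 2 `^ (R * (n i)%:R ^+ (q - 1)) <= (idM (C i))%:R) /\
      (forall i, lambda1 (C i) < (n i)%:R `^ (- mu)) /\
      (forall i, lambda2 (C i) < (n i)%:R `^ (- mu)).
Proof.
case: q => [|q] // q_ge2 mu_gt0 R_gt0 [n [C [n_gt0 [n_large [M_ge [l1_lt l2_lt]]]]]].
have q_gt0 : (0 < q)%N := q_ge2.
pose mu' := Num.min mu 1.
have mu'_gt0 : 0 < mu' by rewrite lt_min mu_gt0 ltr01.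
have mu'_in : 0 < mu' <= 1 by rewrite mu'_gt0 ge_min lexx orbT.
pose K := Num.max 4 ((32 * 2 ^+ q + 4) / (R * ln 2)).
have K_ge0 : 0 <= K by rewrite le_max ler0n.
have [i /(_ i (leqnn i)) i_large] := n_large (Num.truncn (K `^ (mu' / 2)^-1)).+1.
have n_ge : K `^ (mu' / 2)^-1 <= (n i)%:R.
  by apply/ltW/(lt_le_trans (truncnS_gt _)); rewrite ler_nat.
have eps_le : (n i)%:R `^ (- mu) <= (n i)%:R `^ (- mu') :> RT.
  by rewrite ler_powR ?ler1n ?lerN2 ?ge_min ?lexx.
have := idcode_card_lt_exp2 (C := C i) q_gt0 (n_gt0 i) mu'_in R_gt0
  (le_powR_of_powRV_le (divr_gt0 mu'_gt0 (ltr0Sn RT 1)) K_ge0 (ler0n _ _) n_ge)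
  (ltW (lt_le_trans (l1_lt i) eps_le)) (ltW (lt_le_trans (l2_lt i) eps_le)).
by rewrite ltNge; move: (M_ge i); rewrite subn1 => ->.
Qed.
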